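(* Consider the uncontrolled network SIS system $\dot x=(-D+B-XB)x$ and the controlled system $\dot x=(-D-H(x)+B-XB)x$, with $B$ irreducible and $s(-D+B)>0$, where $H(x)=\operatorname{diag}(h_1(x_1),\dots,h_n(x_n))$, each $h_i:[0,1]\to\mathbb{R}_{\ge0}$ is bounded, smooth, monotonically nondecreasing with $h_i(0)=0$, and there exists an index $j$ such that $h_j(s)>0$ for all $s\in(0,1]$. Let $x^*$ and $\bar x^*$ denote the unique endemic equilibria (in $\Xi_n\setminus\{0_n\}$) of the uncontrolled and controlled systems, respectively. Then $\bar x^*<x^*$ entrywise, i.e. $\bar x^*_i<x^*_i$ for every $i=1,\dots,n$.
   Context: $n\ge2$, $D=\operatorname{diag}(d_1,\dots,d_n)$ with $d_i>0$, $B=(b_{ij})\in\mathbb{R}^{n\times n}$ entrywise nonnegative and irreducible (equivalently, its directed graph is strongly connected), $X=\operatorname{diag}(x_1,\dots,x_n)$. $\Xi_n=[0,1]^n$. $s(M)$ denotes the largest real part of the eigenvalues of a square matrix $M$. (Under these hypotheses each system has exactly one equilibrium in $\Xi_n\setminus\{0_n\}$, lying in the interior of $\Xi_n$.) *)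

From Stdlib Require Import Reals Relations.
Open Scope R_scope.

(* Vectors in R^n are functions nat -> R (only indices < n matter);
   n x n matrices are functions nat -> nat -> R. *)

Fixpoint rsum (n : nat) (f : nat -> R) : R :=
  match n with
  | O => 0
  | S k => rsum k f + f k
  end.

Definition mvmul (n : nat) (M : nat -> nat -> R) (x : nat -> R) (i : nat) : R :=
  rsum n (fun j => M i j * x j).

Definition mDpB (d : nat -> R) (B : nat -> nat -> R) : nat -> nat -> R :=
  fun i j => (if Nat.eq_dec i j then - d i else 0) + B i j.

(* a + i b (a, b real) is an eigenvalue of the real matrix M:
   there is a nonzero complex vector u + i v with M (u + i v) = (a + i b)(u + i v). *)
Definition is_eigenvalue (n : nat) (M : nat -> nat -> R) (a b : R) : Prop :=
  exists u v : nat -> R,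
    (exists i, (i < n)%nat /\ (u i <> 0 \/ v i <> 0)) /\
    (forall i, (i < n)%nat ->
       mvmul n M u i = a * u i - b * v i /\
       mvmul n M v i = b * u i + a * v i).

(* s(M) > 0, where s(M) = max real part of the (finitely many) eigenvalues *)
Definition spectral_abscissa_pos (n : nat) (M : nat -> nat -> R) : Prop :=
  exists a b, is_eigenvalue n M a b /\ 0 < a.

Definition graph_edge (n : nat) (B : nat -> nat -> R) (i j : nat) : Prop :=
  (i < n)%nat /\ (j < n)%nat /\ B j i <> 0.

(* B irreducible <-> its directed graph is strongly connected *)
Definition irreducible (n : nat) (B : nat -> nat -> R) : Prop :=
  forall i j, (i < n)%nat -> (j < n)%nat ->
    clos_refl_trans nat (graph_edge n B) i j.

Definition in_Xi (n : nat) (x : nat -> R) : Prop :=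
  forall i, (i < n)%nat -> 0 <= x i <= 1.

Definition nonzero_vec (n : nat) (x : nat -> R) : Prop :=
  exists i, (i < n)%nat /\ x i <> 0.

Definition smooth_R (g : R -> R) : Prop :=
  exists dg : nat -> R -> R,
    dg O = g /\ forall k x, derivable_pt_lim (dg k) x (dg (S k) x).

(* h is smooth on [0,1]: restriction of a C^infinity function on R *)
Definition smooth_on_01 (h : R -> R) : Prop :=
  exists g, smooth_R g /\ forall s, 0 <= s <= 1 -> g s = h s.

Definition admissible_control (h : R -> R) : Prop :=
  (exists K, forall s, 0 <= s <= 1 -> Rabs (h s) <= K) /\
  smooth_on_01 h /\
  (forall s t, 0 <= s -> s <= t -> t <= 1 -> h s <= h t) /\
  (forall s, 0 <= s <= 1 -> 0 <= h s) /\
  h 0 = 0.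

Definition is_equilibrium (n : nat) (d : nat -> R) (B : nat -> nat -> R)
    (x : nat -> R) : Prop :=
  forall i, (i < n)%nat ->
    - d i * x i + mvmul n B x i - x i * mvmul n B x i = 0.

Definition is_equilibrium_ctrl (n : nat) (d : nat -> R) (h : nat -> R -> R)
    (B : nat -> nat -> R) (x : nat -> R) : Prop :=
  forall i, (i < n)%nat ->
    - d i * x i - h i (x i) * x i + mvmul n B x i - x i * mvmul n B x i = 0.

(* The controlled equilibrium solves the uncontrolled fixed-point equations
   with larger recovery rates d_i + h_i(x_i).  Comparing the two equilibria
   at an index maximising the ratio xbar_i / x_i shows xbar <= x, and at an
   index where equality holds the equations force equality of the rates and
   of all out-neighbours.  By irreducibility equality would then spread to
   every index, including the one where the control is strictly positive. *)

From Stdlib Require Import Reals Lra Lia Psatz Relations.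
Open Scope R_scope.

Lemma rsum_le n f g :
  (forall j, (j < n)%nat -> f j <= g j) -> rsum n f <= rsum n g.
Proof.
  induction n as [|n IH]; simpl; intros Hfg; [lra|].
  assert (Hn := Hfg n ltac:(lia)).
  assert (rsum n f <= rsum n g) by (apply IH; intros; apply Hfg; lia).
  lra.
Qed.

Lemma rsum_sub n f g : rsum n f - rsum n g = rsum n (fun j => f j - g j).
Proof. induction n as [|n IH]; simpl; [lra|]. rewrite <- IH. lra. Qed.

Lemma rsum_scal_l n t f : rsum n (fun j => t * f j) = t * rsum n f.
Proof. induction n as [|n IH]; simpl; [lra|]. rewrite IH. lra. Qed.

Lemma rsum_nonneg n f : (forall j, (j < n)%nat -> 0 <= f j) -> 0 <= rsum n f.
Proof.
  induction n as [|n IH]; simpl; intros Hf; [lra|].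
  assert (Hn := Hf n ltac:(lia)).
  assert (0 <= rsum n f) by (apply IH; intros; apply Hf; lia).
  lra.
Qed.

Lemma rsum_eq0_nonneg n f :
  (forall j, (j < n)%nat -> 0 <= f j) -> rsum n f = 0 ->
  forall j, (j < n)%nat -> f j = 0.
Proof.
  induction n as [|n IH]; simpl; intros Hf Hsum j Hj; [lia|].
  assert (Hn := Hf n ltac:(lia)).
  assert (0 <= rsum n f) by (apply rsum_nonneg; intros; apply Hf; lia).
  destruct (Nat.eq_dec j n) as [->|Hjn]; [lra|].
  apply IH; [intros; apply Hf; lia|lra|lia].
Qed.

Lemma exists_argmax n (f : nat -> R) : (1 <= n)%nat ->
  exists k, (k < n)%nat /\ forall j, (j < n)%nat -> f j <= f k.
Proof.
  induction n as [|n IH]; intros Hn; [lia|].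
  destruct (Nat.eq_dec n 0) as [->|Hn0].
  - exists 0%nat; split; [lia|]. intros j Hj. replace j with 0%nat by lia. lra.
  - destruct (IH ltac:(lia)) as [k [Hk Hmax]].
    destruct (Rle_dec (f n) (f k)).
    + exists k; split; [lia|]. intros j Hj.
      destruct (Nat.eq_dec j n) as [->|]; [lra|]. apply Hmax; lia.
    + exists n; split; [lia|]. intros j Hj.
      destruct (Nat.eq_dec j n) as [->|]; [lra|].
      assert (f j <= f k) by (apply Hmax; lia). lra.
Qed.

Lemma exists_max_ratio n (x y : nat -> R) (i : nat) : (i < n)%nat ->
  (forall j, (j < n)%nat -> 0 < x j) ->
  exists k t, (k < n)%nat /\ y k = t * x k /\
              forall j, (j < n)%nat -> y j <= t * x j.
Proof.
  intros Hi Hx.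
  destruct (exists_argmax n (fun j => y j / x j) ltac:(lia)) as [k [Hk Hmax]].
  exists k, (y k / x k); repeat split; auto.
  - assert (Hxk := Hx k Hk). field. lra.
  - intros j Hj. assert (Hxj := Hx j Hj). assert (Hq := Hmax j Hj). simpl in Hq.
    replace (y j) with (y j / x j * x j) by (field; lra).
    apply Rmult_le_compat_r; lra.
Qed.

Lemma mvmul_scal n M x t k :
  mvmul n M (fun j => t * x j) k = t * mvmul n M x k.
Proof.
  unfold mvmul. rewrite <- rsum_scal_l.
  induction n as [|n IH]; simpl; [lra|]. rewrite IH. ring.
Qed.

Lemma mvmul_zero n M k : mvmul n M (fun _ => 0) k = 0.
Proof.
  unfold mvmul. induction n as [|n IH]; simpl; [lra|]. rewrite IH. lra.
Qed.

Lemma mvmul_le_compat n M x y k :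
  (forall j, (j < n)%nat -> 0 <= M k j) ->
  (forall j, (j < n)%nat -> x j <= y j) ->
  mvmul n M x k <= mvmul n M y k.
Proof.
  intros HM Hxy. apply rsum_le. intros j Hj.
  apply Rmult_le_compat_l; auto.
Qed.

Lemma mvmul_eq_support n M x y k j :
  (forall j, (j < n)%nat -> 0 <= M k j) ->
  (forall j, (j < n)%nat -> x j <= y j) ->
  mvmul n M x k = mvmul n M y k ->
  (j < n)%nat -> M k j <> 0 -> x j = y j.
Proof.
  intros HM Hxy Heq Hj HMkj.
  assert (Hsum : rsum n (fun j => M k j * y j - M k j * x j) = 0).
  { rewrite <- rsum_sub. unfold mvmul in Heq. lra. }
  assert (Hterm : forall j', (j' < n)%nat -> 0 <= M k j' * y j' - M k j' * x j').
  { intros j' Hj'. assert (HMj := HM j' Hj'). assert (Hxyj := Hxy j' Hj'). nra. }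
  assert (Hkj := rsum_eq0_nonneg n _ Hterm Hsum j Hj). simpl in Hkj.
  assert (Hprod : M k j * (y j - x j) = 0) by lra.
  apply Rmult_integral in Hprod. destruct Hprod; [contradiction|lra].
Qed.

Lemma irreducible_propagate n B (P : nat -> Prop) :
  irreducible n B ->
  (forall i j, (i < n)%nat -> (j < n)%nat -> B i j <> 0 -> P i -> P j) ->
  forall i, (i < n)%nat -> P i -> forall j, (j < n)%nat -> P j.
Proof.
  intros Hirr Hstep i Hi Pi j Hj.
  assert (Hback : forall a b, clos_refl_trans nat (graph_edge n B) a b -> P b -> P a).
  { intros a b Hab. induction Hab as [a b [Ha [Hb HBba]]| |]; eauto. }
  exact (Hback j i (Hirr j i Hj Hi) Pi).
Qed.

(* Equilibria with extra recovery rates c: c = 0 is the uncontrolled system,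
   c_i = h_i(x_i) the controlled one. *)
Definition is_equilibrium_rate (n : nat) (d : nat -> R) (B : nat -> nat -> R)
    (c x : nat -> R) : Prop :=
  forall i, (i < n)%nat -> (d i + c i) * x i = (1 - x i) * mvmul n B x i.

Lemma equilibrium_rate0 n d B x :
  is_equilibrium n d B x -> is_equilibrium_rate n d B (fun _ => 0) x.
Proof. intros Heq i Hi. assert (E := Heq i Hi). lra. Qed.

Lemma equilibrium_ctrl_rate n d h B x :
  is_equilibrium_ctrl n d h B x ->
  is_equilibrium_rate n d B (fun i => h i (x i)) x.
Proof. intros Heq i Hi. assert (E := Heq i Hi). lra. Qed.

Section RateEquilibria.

Variables (n : nat) (d : nat -> R) (B : nat -> nat -> R).
Hypothesis d_pos : forall i, (i < n)%nat -> 0 < d i.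
Hypothesis B_nonneg : forall i j, (i < n)%nat -> (j < n)%nat -> 0 <= B i j.
Hypothesis B_irr : irreducible n B.

Lemma equilibrium_rate_pos c x :
  in_Xi n x -> nonzero_vec n x -> is_equilibrium_rate n d B c x ->
  forall i, (i < n)%nat -> 0 < x i.
Proof.
  intros HX [i0 [Hi0 Hx0]] Heq i Hi.
  destruct (HX i Hi) as [[Hpos|Hzero] _]; [exact Hpos|exfalso].
  apply Hx0.
  apply (irreducible_propagate n B (fun j => x j = 0) B_irr) with i; auto.
  intros a b Ha Hb HBab Hxa.
  assert (HBx : mvmul n B (fun _ => 0) a = mvmul n B x a).
  { rewrite mvmul_zero. assert (E := Heq a Ha). rewrite Hxa in E. lra. }
  symmetry.
  apply (mvmul_eq_support n B (fun _ => 0) x a b); auto.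
  intros j Hj. apply HX, Hj.
Qed.

Lemma equilibrium_rate_lt1 c x i :
  0 <= c i -> in_Xi n x -> is_equilibrium_rate n d B c x -> (i < n)%nat ->
  x i < 1.
Proof.
  intros Hc HX Heq Hi. destruct (HX i Hi) as [_ [Hlt|Hx1]]; [exact Hlt|].
  assert (E := Heq i Hi). assert (Hd := d_pos i Hi). rewrite Hx1 in E. lra.
Qed.

Variables (c c' x y : nat -> R).
Hypothesis c_nonneg : forall i, (i < n)%nat -> 0 <= c i.
Hypothesis c_le : forall i, (i < n)%nat -> c i <= c' i.
Hypothesis x_Xi : in_Xi n x.
Hypothesis x_pos : forall i, (i < n)%nat -> 0 < x i.
Hypothesis y_Xi : in_Xi n y.
Hypothesis x_eq : is_equilibrium_rate n d B c x.
Hypothesis y_eq : is_equilibrium_rate n d B c' y.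

Let x_lt1 i (Hi : (i < n)%nat) : x i < 1 :=
  equilibrium_rate_lt1 c x i (c_nonneg i Hi) x_Xi x_eq Hi.

Lemma equilibrium_rate_antitone : forall i, (i < n)%nat -> y i <= x i.
Proof.
  intros i Hi.
  destruct (exists_max_ratio n x y i Hi x_pos) as [k [t [Hk [Hyk Hyt]]]].
  assert (Ht : t <= 1).
  { apply Rnot_lt_le. intros Ht.
    assert (HBy : mvmul n B y k <= t * mvmul n B x k).
    { rewrite <- mvmul_scal. apply mvmul_le_compat; auto. }
    assert (Ex := x_eq k Hk). assert (Ey := y_eq k Hk).
    assert (Hxk := x_pos k Hk). assert (Hxk1 := x_lt1 k Hk).
    assert (Hdk := d_pos k Hk). assert (Hck := c_nonneg k Hk).
    assert (Hc'k := c_le k Hk). destruct (y_Xi k Hk) as [_ Hyk1].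
    rewrite Hyk in Ey, Hyk1.
    assert (HBx : 0 < mvmul n B x k).
    { apply Rnot_le_lt. intros HBx.
      assert (0 <= (1 - x k) * - mvmul n B x k) by (apply Rmult_le_pos; lra).
      assert (0 < (d k + c k) * x k) by (apply Rmult_lt_0_compat; lra).
      lra. }
    (* Subtracting t times the equation for x at k from the one for y gives
       (c'_k - c_k) t x_k <= -(t - 1) t x_k (Bx)_k < 0. *)
    assert (0 <= (1 - t * x k) * (t * mvmul n B x k - mvmul n B y k))
      by (apply Rmult_le_pos; lra).
    assert (0 < (t - 1) * x k * (t * mvmul n B x k))
      by (repeat apply Rmult_lt_0_compat; lra).
    assert (0 <= (c' k - c k) * (t * x k))
      by (apply Rmult_le_pos; [lra|apply Rmult_le_pos; lra]).
    nra. }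
  assert (Hxi := x_pos i Hi). assert (Hyi := Hyt i Hi). nra.
Qed.

Lemma equilibrium_rate_eq_propagate k : (k < n)%nat -> y k = x k ->
  c' k = c k /\ forall j, (j < n)%nat -> B k j <> 0 -> y j = x j.
Proof.
  intros Hk Hyxk.
  assert (HBy : mvmul n B y k <= mvmul n B x k)
    by (apply mvmul_le_compat; auto; apply equilibrium_rate_antitone).
  assert (Ex := x_eq k Hk). assert (Ey := y_eq k Hk). rewrite Hyxk in Ey.
  assert (Hxk := x_pos k Hk). assert (Hxk1 := x_lt1 k Hk).
  assert (Hc'k := c_le k Hk).
  (* (c'_k - c_k) x_k = (1 - x_k) ((By)_k - (Bx)_k): left >= 0 >= right. *)
  assert (Hc : (c' k - c k) * x k = 0) by nra.
  assert (HBxy : mvmul n B y k = mvmul n B x k) by nra.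
  split.
  - apply Rmult_integral in Hc. destruct Hc; lra.
  - intros j Hj HBkj.
    apply (mvmul_eq_support n B y x k j); auto.
    apply equilibrium_rate_antitone.
Qed.

Lemma equilibrium_rate_strict_antitone :
  (exists j, (j < n)%nat /\ c j < c' j) ->
  forall i, (i < n)%nat -> y i < x i.
Proof.
  intros [j [Hj Hcj]] i Hi.
  destruct (equilibrium_rate_antitone i Hi) as [Hlt|Heqi]; [exact Hlt|exfalso].
  assert (Hall : forall k, (k < n)%nat -> y k = x k).
  { apply (irreducible_propagate n B (fun k => y k = x k) B_irr) with i; auto.
    intros a b Ha Hb HBab Ha_eq.
    exact (proj2 (equilibrium_rate_eq_propagate a Ha Ha_eq) b Hb HBab). }
  destruct (equilibrium_rate_eq_propagate j Hj (Hall j Hj)). lra.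
Qed.

End RateEquilibria.

Theorem lemma5 (n : nat) (d : nat -> R) (B : nat -> nat -> R)
    (h : nat -> R -> R) (xs xbs : nat -> R) :
  (2 <= n)%nat ->
  (forall i, (i < n)%nat -> 0 < d i) ->
  (forall i j, (i < n)%nat -> (j < n)%nat -> 0 <= B i j) ->
  irreducible n B ->
  spectral_abscissa_pos n (mDpB d B) ->
  (forall i, (i < n)%nat -> admissible_control (h i)) ->
  (exists j, (j < n)%nat /\ forall s, 0 < s <= 1 -> 0 < h j s) ->
  in_Xi n xs -> nonzero_vec n xs -> is_equilibrium n d B xs ->
  in_Xi n xbs -> nonzero_vec n xbs -> is_equilibrium_ctrl n d h B xbs ->
  forall i, (i < n)%nat -> xbs i < xs i.
Proof.
  intros _ Hd HB Hirr _ Hadm [j [Hj Hhj]] HXx Hnzx Hx HXy Hnzy Hy.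
  apply equilibrium_rate0 in Hx. apply equilibrium_ctrl_rate in Hy.
  assert (Hxpos := equilibrium_rate_pos n d B HB Hirr _ xs HXx Hnzx Hx).
  assert (Hypos := equilibrium_rate_pos n d B HB Hirr _ xbs HXy Hnzy Hy).
  apply (equilibrium_rate_strict_antitone n d B Hd HB Hirr
           (fun _ => 0) (fun i => h i (xbs i)) xs xbs); auto.
  - intros; lra.
  - intros i Hi. destruct (Hadm i Hi) as [_ [_ [_ [Hnonneg _]]]].
    apply Hnonneg, HXy, Hi.
  - exists j. split; [exact Hj|].
    apply Hhj. split; [apply Hypos, Hj|apply HXy, Hj].
Qed.
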